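(* Let $E$ be a reflexive Banach space with $E = V \oplus W$ ($V, W$ linear subspaces, $\dim V < +\infty$), and let $\Phi\colon E \to \mathbb{R}$ be locally Lipschitz and satisfy: (i) $\Phi(w) \to +\infty$ as $\|w\| \to \infty$, $w \in W$; (ii$''$) for every $w \in W$, the map $v \mapsto \Phi(v+w)$ is strictly quasi-concave on $V$; (iii) $\Phi(v+w) \to -\infty$ as $\|v\| \to +\infty$ ($v \in V$), uniformly for $w$ in bounded subsets of $W$; (iv) for every $v \in V$, the map $w \mapsto \Phi(v+w)$ is weakly lower semi-continuous on $W$. Then, writing $s(w)$ for the unique maximizer of $v\mapsto\Phi(v+w)$ on $V$, there is $\overline{w}\in W$ minimizing $w\mapsto\max_{v\in V}\Phi(v+w)$ such that $\overline{u} = s(\overline{w}) + \overline{w}$ is a critical point of $\Phi$ (i.e. $0 \in \partial\Phi(\overline{u})$) and $$\Phi(\overline{u}) = \min_{w \in W} \max_{v \in V} \Phi(v+w).$$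
   Context: A function $f\colon V\to\mathbb{R}$ is strictly quasi-concave if $f(tx+(1-t)y) > \min\{f(x),f(y)\}$ for all $x \neq y$ in $V$ and $t \in (0,1)$. For a locally Lipschitz $\Phi$, $\Phi^\circ(x;v) = \limsup_{y \to x,\, t \downarrow 0} \frac{\Phi(y+tv) - \Phi(y)}{t}$ and the Clarke subdifferential is $\partial\Phi(x) = \{x^* \in E^* : \Phi^\circ(x;v) \ge \langle x^*, v\rangle \ \forall v \in E\}$; $x$ is a critical point if $0 \in \partial\Phi(x)$. *)

From HB Require Import structures.
From mathcomp Require Import all_boot all_order all_algebra.
From mathcomp Require Import all_classical all_reals all_analysis.
Set Implicit Arguments. Unset Strict Implicit. Unset Printing Implicit Defensive.
Import Order.TTheory GRing.Theory Num.Theory.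
Import numFieldNormedType.Exports.
Local Open Scope classical_set_scope.
Local Open Scope ring_scope.

Section Defs.
Context {R : realType} {E : normedModType R}.

Definition dual_elt (f : E -> R) : Prop :=
  (forall x y, f (x + y) = f x + f y) /\
  (forall (a : R) x, f (a *: x) = a * f x) /\
  continuous f.

(* Reflexivity: every bounded linear functional on E^* (bounded w.r.t. the
   dual norm, i.e. |L f| <= C * M whenever |f x| <= M ||x|| for all x) is
   evaluation at some point of E. *)
Definition reflexive_space : Prop :=
  forall L : (E -> R) -> R,
    (forall f g, dual_elt f -> dual_elt g -> L (fun x => f x + g x) = L f + L g) ->
    (forall (a : R) f, dual_elt f -> L (fun x => a * f x) = a * L f) ->
    (exists C : R, forall f, dual_elt f -> forall M : R, 0 <= M ->
        (forall x, `|f x| <= M * `|x|) -> `|L f| <= C * M) ->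
    exists x0 : E, forall f, dual_elt f -> L f = f x0.

Definition lin_subspace (A : set E) : Prop :=
  A 0 /\ (forall x y, A x -> A y -> A (x + y)) /\
  (forall (a : R) x, A x -> A (a *: x)).

Definition finite_dim (A : set E) : Prop :=
  exists (n : nat) (e : 'I_n -> E), forall x, A x ->
    exists c : 'I_n -> R, x = \sum_(i < n) c i *: e i.

Definition direct_sum (V W : set E) : Prop :=
  forall x : E, exists! p : E * E, V p.1 /\ W p.2 /\ x = p.1 + p.2.

Definition locally_lipschitz (Phi : E -> R) : Prop :=
  forall x : E, exists r : R, 0 < r /\ exists L : R, forall y z : E,
    `|y - x| < r -> `|z - x| < r -> `|Phi y - Phi z| <= L * `|y - z|.

Definition strictly_quasi_concave_on (V : set E) (f : E -> R) : Prop :=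
  forall x y : E, V x -> V y -> x <> y -> forall t : R, 0 < t -> t < 1 ->
    Num.min (f x) (f y) < f (t *: x + (1 - t) *: y).

(* lower semicontinuity of g on W for the weak topology sigma(E, E^* ):
   at each w0 in W and each c < g w0 there is a weak neighbourhood
   {w : |f_i (w - w0)| < eps, i < n} (f_i in E^* ) on which g > c (within W). *)
Definition weakly_lsc_on (W : set E) (g : E -> R) : Prop :=
  forall w0 : E, W w0 -> forall c : R, c < g w0 ->
    exists (n : nat) (fs : 'I_n -> E -> R) (eps : R),
      (forall i, dual_elt (fs i)) /\ 0 < eps /\
      forall w : E, W w -> (forall i, `|fs i (w - w0)| < eps) -> c < g w.

(* Clarke generalized directional derivative:
   limsup_{y -> x, t \downarrow 0} (Phi (y + t v) - Phi y) / t
   = inf_{delta > 0} sup { quotient : |y - x| < delta, 0 < t < delta }. *)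
Definition clarke_dd (Phi : E -> R) (x v : E) : \bar R :=
  ereal_inf [set ereal_sup [set q : \bar R | exists (y : E) (t : R),
                  `|y - x| < delta /\ 0 < t /\ t < delta /\
                  q = ((Phi (y + t *: v) - Phi y) / t)%:E]
            | delta in [set d : R | 0 < d]].

Definition clarke_subdiff (Phi : E -> R) (x : E) : set (E -> R) :=
  [set xs | dual_elt xs /\ forall v : E, ((xs v)%:E <= clarke_dd Phi x v)%E].

Definition critical_point (Phi : E -> R) (x : E) : Prop :=
  clarke_subdiff Phi x (fun _ => 0).

End Defs.

From HB Require Import structures.
From mathcomp Require Import all_boot all_order all_algebra.
From mathcomp Require Import all_classical all_reals all_analysis.
From mathcomp Require Import lra.
Set Implicit Arguments. Unset Strict Implicit. Unset Printing Implicit Defensive.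
Import Order.TTheory GRing.Theory Num.Theory.
Import numFieldNormedType.Exports.
Local Open Scope classical_set_scope.
Local Open Scope ring_scope.

(** For fixed [w] in [W], [v |-> Phi (v + w)] tends to [-oo] on the
   finite-dimensional [V], whose bounded closed subsets are compact, so it has
   a maximizer [s(w)], unique by strict quasi-concavity.  The sum [V + W] is
   only algebraic, but the growth conditions (i) and (iii) force [V] and [W] to
   be closed; hence the projection onto [V] is continuous and [W] is the common
   kernel of finitely many continuous functionals, so [W] is weakly closed.
   The max-function [m(w) = Phi (s(w) + w)] is a supremum of the weakly l.s.c.
   functions [w |-> Phi (v + w)] and is coercive on [W] because
   [m(w) >= Phi w]; in a reflexive space an ultrafilter on a bounded sublevel
   set of [m] converges weakly, and its weak limit [wb] minimizes [m].
   Cluster points of [s] at [w] are maximizers, so [s] is continuous; moving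
   [wb] a little in [W] and compensating in [V] then produces, in every
   neighbourhood of [s(wb) + wb], difference quotients of [Phi] that are
   nonnegative, i.e. [0] is in the Clarke subdifferential. *)

Lemma compact_cluster_cvg (T : topologicalType) (F : set_system T) (K : set T) (x : T) :
  ProperFilter F -> compact K -> F K -> (forall y, cluster F y -> y = x) -> F --> x.
Proof.
move=> FF cK FK clx N Nx; apply: contrapT => nFN.
pose G := filter_from F (fun B => B `&` ~` N).
have GF : ProperFilter G.
  apply: filter_from_proper => [|B FB]; last first.
    apply: contrapT => BN; apply: nFN; apply: (filterS _ FB) => y By.
    by apply: contrapT => Ny; apply: BN; exists y.
  apply: filter_from_filter; first by exists setT; exact: filterT.
  move=> B1 B2 FB1 FB2; exists (B1 `&` B2); first exact: filterI.
  by move=> y [[B1y B2y] Ny].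
have FG A : F A -> G A by move=> FA; exists A => // y [].
have [y [_ clGy]] := cK G GF (FG K FK).
have yx : y = x by apply: clx => A B FA; apply: clGy; exact: FG.
have GN : G (~` N) by exists setT; [exact: filterT|move=> z []].
by rewrite yx in clGy; have [z [Nz N'z]] := clGy _ N GN Nx.
Qed.

Lemma ultra_bounded_cvg {R : realType} (T : Type) (G : set_system T) (h : T -> R) (M : R) :
  UltraFilter G -> G [set t | `|h t| <= M] -> cvg (h @ G).
Proof.
move=> GU GM; have GP : ProperFilter G by exact: ultra_proper.
have hGM : (h @ G) `[- M, M]%classic.
  apply: (filterS (P := [set t | `|h t| <= M])) GM => t hM.
  by rewrite /= in_itv /= -ler_norml.
have [p [_ clp]] := @segment_compact _ (- M) M (h @ G) _ hGM.
apply: (cvgP p) => N Np; case: (in_ultra_setVsetC (h @^-1` N) GU) => // GNc.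
by have [t [Nct Nt]] := clp (~` N) N GNc Np.
Qed.

Section NormedSpace.
Context {R : realType} {E : normedModType R}.

Lemma closure_normP (A : set E) p :
  closure A p <-> forall e : R, 0 < e -> exists a, A a /\ `|p - a| < e.
Proof.
split => [clAp e e0|H B /nbhs_normP [e e0 eB]].
  have [a [Aa pa]] := clAp _ (nbhsx_ballx p e e0).
  by exists a; split => //; rewrite -ball_normE in pa.
by have [a [Aa pa]] := H e e0; exists a; split => //; apply: eB.
Qed.

Lemma closed_norm_le (r : R) : closed [set x : E | `|x| <= r].
Proof.
change (closed ((@Num.norm R E) @^-1` [set y : R | y <= r])).
by apply: preimage_closed; [move=> x _; exact: norm_continuous|exact: closed_le].
Qed.

Lemma continuous_normP (f : E -> R) x : {for x, continuous f} ->
  forall e : R, 0 < e -> exists2 d : R, 0 < d & forall y, `|x - y| < d -> `|f x - f y| < e.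
Proof. by move=> /cvgrPdist_lt fx e /fx /nbhs_normP [d d0 H]; exists d. Qed.

Lemma locally_lipschitz_continuous (Phi : E -> R) :
  locally_lipschitz Phi -> continuous Phi.
Proof.
move=> LL x; have [r [r0 [L HL]]] := LL x.
apply/cvgrPdist_lt => eps eps0.
have L1 : 0 < `|L| + 1 by rewrite ltr_wpDl.
apply/nbhs_normP; exists (Num.min r (eps / (`|L| + 1))).
  by rewrite /= lt_min r0 divr_gt0.
move=> y /=; rewrite lt_min => /andP[yr].
rewrite ltr_pdivlMr // => ye.
have := HL x y; rewrite subrr normr0 distrC => /(_ r0 yr) xy.
apply: (le_lt_trans xy); have := ler_norm L; have := normr_ge0 (x - y).
by move: ye; set a := `|x - y|; set k := `|L|; nra.
Qed.

Lemma dual_eltB (f : E -> R) : dual_elt f -> forall x y, f (x - y) = f x - f y.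
Proof. by move=> [fD [fZ _]] x y; rewrite -scaleN1r fD fZ mulN1r. Qed.

Lemma dual_elt_bounded (f : E -> R) : dual_elt f ->
  exists C : R, 0 < C /\ forall x, `|f x| <= C * `|x|.
Proof.
move=> [fD [fZ fC]].
have fL : linear_for *:%R (f : E -> R^o) by move=> a x y; rewrite fD fZ.
pose g := HB.pack_for {linear E -> R^o} f (GRing.isLinear.Build R E R^o *:%R f fL).
have /linear_boundedP [M [_ HM]] :=
  continuous_linear_bounded 0 (fC 0 : {for 0, continuous g}).
have [M0 MM] : 0 <= Num.max M 0 /\ M <= Num.max M 0 by rewrite !le_max !lexx orbT.
by exists (Num.max M 0 + 1); split; [rewrite ltr_wpDl|apply: HM; rewrite ltr_pwDr].
Qed.

Lemma bounded_dual_elt (f : E -> R) :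
  (forall x y, f (x + y) = f x + f y) -> (forall (a : R) x, f (a *: x) = a * f x) ->
  (exists C : R, forall x, `|f x| <= C * `|x|) -> dual_elt f.
Proof.
move=> fD fZ [C HC]; do 2!split => //.
have fL : linear_for *:%R (f : E -> R^o) by move=> a x y; rewrite fD fZ.
pose g := HB.pack_for {linear E -> R^o} f (GRing.isLinear.Build R E R^o *:%R f fL).
apply: (@bounded_linear_continuous _ _ _ g); apply/linear_boundedP.
near=> r => x; apply: (le_trans (HC x)).
by rewrite ler_wpM2r //; near: r; apply: nbhs_pinfty_ge.
Unshelve. all: by end_near.
Qed.

Lemma compact_closed_dist_gt0 (K C : set E) : compact K -> closed C ->
  (forall k, K k -> ~ C k) ->
  exists2 d : R, 0 < d & forall k c, K k -> C c -> d <= `|k - c|.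
Proof.
move=> cK cC KC; apply: contrapT => nd.
have close d : 0 < d -> exists k, K k /\ exists c, C c /\ `|k - c| < d.
  move=> d0; apply: contrapT => nk; apply: nd; exists d => // k c Kk Cc.
  by rewrite leNgt; apply/negP => kc; apply: nk; exists k; split => //; exists c.
pose B d := [set k | K k /\ exists c, C c /\ `|k - c| < d].
have FF : ProperFilter (filter_from [set d : R | 0 < d] B).
  apply: filter_from_proper => [|d /close [k Bk]]; last by exists k.
  apply: filter_from_filter; first by exists 1; rewrite /= ltr01.
  move=> i j i0 j0; exists (Num.min i j); first by rewrite /= lt_min i0.
  move=> k [Kk [c [Cc]]]; rewrite lt_min => /andP[ki kj].
  by split; split => //; exists c.
have FK : filter_from [set d : R | 0 < d] B K by exists 1 => [|k []]; rewrite /= ?ltr01.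
have [k [Kk clk]] := cK _ FF FK.
apply: (KC k Kk); apply: cC; apply/closure_normP => e e0.
have e2 : 0 < e / 2 by rewrite divr_gt0.
have FB : filter_from [set d : R | 0 < d] B (B (e / 2)) by exists (e / 2).
have [k' [[_ [c [Cc k'c]]] kk']] := clk _ _ FB (nbhsx_ballx k _ e2).
exists c; split => //; rewrite -ball_normE /= in kk'.
have := ler_normD (k - k') (k' - c); rewrite addrA subrK.
by move: kk' k'c; lra.
Qed.


End NormedSpace.

(** * Finite-dimensional spans *)

Section FiniteSpan.
Context {R : realType} {E : normedModType R}.
Variable e : nat -> E.

Definition finspan n : set E :=
  [set x | exists c : nat -> R, x = \sum_(i < n) c i *: e i].

Lemma finspan0 n : finspan n 0.
Proof. by exists (fun=> 0); rewrite big1 // => i _; rewrite scale0r. Qed.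

Lemma finspanZD n (a : R) x y : finspan n x -> finspan n y -> finspan n (a *: x + y).
Proof.
move=> [c ->] [d ->]; exists (fun i => a * c i + d i).
by rewrite scaler_sumr -big_split; apply: eq_bigr => i _; rewrite scalerDl scalerA.
Qed.

Lemma finspanZ n (a : R) x : finspan n x -> finspan n (a *: x).
Proof. by move=> Sx; rewrite -[_ *: _]addr0; apply: finspanZD => //; exact: finspan0. Qed.

Lemma finspanB n x y : finspan n x -> finspan n y -> finspan n (x - y).
Proof. by move=> Sx Sy; rewrite addrC -scaleN1r; apply: finspanZD. Qed.

Lemma finspanS n x :
  finspan n.+1 x <-> exists s (t : R), finspan n s /\ x = s + t *: e n.
Proof.
split => [[c ->]|[s [t [[c ->] ->]]]].
  rewrite big_ord_recr /=; exists (\sum_(i < n) c i *: e i), (c n).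
  by split => //; exists c.
exists (fun i => if i == n then t else c i); rewrite big_ord_recr /= eqxx.
by congr (_ + _); apply: eq_bigr => i _; rewrite (ltn_eqF (ltn_ord i)).
Qed.

(* The [e i] may be linearly dependent; [l] is then one linear choice of
   coefficients. *)
Definition bounded_coordinates n (K : R) (l : nat -> E -> R) :=
  0 <= K /\ forall x, finspan n x ->
  [/\ x = \sum_(i < n) l i x *: e i, forall i, `|l i x| <= K * `|x| &
      forall (a : R) y i, finspan n y -> l i (a *: x + y) = a * l i x + l i y].

Definition comb n (c : 'rV[R]_n) : E := \sum_(i < n) c ord0 i *: e i.

Definition coef_box n (r : R) : set 'rV[R]_n :=
  [set c | forall i, `[- r, r]%classic (c ord0 i)].

Lemma comb_continuous n : continuous (@comb n).
Proof.
apply: continuous_big => [|i _ c]; first exact: add_continuous.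
exact/continuousZr_tmp/coord_continuous.
Qed.

Lemma comb_finspan n c : finspan n (@comb n c).
Proof.
exists (fun i => if insub i is Some j then c ord0 j else 0).
by apply: eq_bigr => i _; rewrite valK.
Qed.

Lemma compact_comb_box n r : compact (@comb n @` @coef_box n r).
Proof.
apply: continuous_compact; first exact/continuous_subspaceT/comb_continuous.
by apply: (@rV_compact _ _ (fun=> `[- r, r]%classic)) => _; exact: segment_compact.
Qed.

Section Coordinates.
Variables (n : nat) (K : R) (l : nat -> E -> R).
Hypothesis Kl : bounded_coordinates n K l.

Lemma finspan_ball_sub_comb_box (M : R) :
  [set x | finspan n x /\ `|x| <= M] `<=` @comb n @` @coef_box n (K * M).
Proof.
move=> x [Sx xM]; have [K0 /(_ x Sx) [xl lb _]] := Kl.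
exists (\row_(i < n) l i x).
  move=> i; rewrite mxE /= in_itv /= -ler_norml.
  by apply: le_trans (lb i) _; rewrite ler_wpM2l.
by rewrite /comb [RHS]xl; apply: eq_bigr => i _; rewrite mxE.
Qed.

(* Points close to [p] have norm at most [|p| + 1], so their coefficients lie
   in a compact box. *)
Lemma finspan_closed : closed (finspan n).
Proof.
move=> p clp; have [c _ <-] : (@comb n @` @coef_box n (K * (`|p| + 1))) p.
  apply: compact_closed; first exact: norm_hausdorff.
    exact: compact_comb_box.
  apply/closure_normP => eps eps0.
  have m0 : 0 < Num.min eps 1 by rewrite lt_min eps0 ltr01.
  have [a [Sa pa]] := (closure_normP _ _).1 clp _ m0.
  exists a; split; last by apply: lt_le_trans pa _; rewrite ge_min lexx.
  apply: finspan_ball_sub_comb_box; split => //.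
  have : `|p - a| <= 1 by apply/ltW/(lt_le_trans pa); rewrite ge_min lexx orbT.
  by have := ler_normB p (p - a); rewrite opprB addrC subrK; lra.
exact: comb_finspan.
Qed.

Lemma finspan_bounded_closed_compact (B : set E) (M : R) : B `<=` finspan n ->
  (forall x, B x -> `|x| <= M) -> closed B -> compact B.
Proof.
move=> BS BM cB; apply: (subclosed_compact cB (@compact_comb_box n (K * M))).
by move=> x Bx; apply: finspan_ball_sub_comb_box; split; [exact: BS|exact: BM].
Qed.

Lemma coordD i x y : finspan n x -> finspan n y -> l i (x + y) = l i x + l i y.
Proof.
move=> Sx Sy; have [_ /(_ x Sx) [_ _ /(_ 1 y i Sy)]] := Kl.
by rewrite scale1r mul1r.
Qed.

Lemma coordZ i (a : R) x : finspan n x -> l i (a *: x) = a * l i x.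
Proof.
move=> Sx; have S0 : finspan n 0 by exact: finspan0.
have l0 : l i 0 = 0.
  by apply: (addrI (l i 0)); rewrite addr0 -{3}[0]addr0 coordD.
by have [_ /(_ x Sx) [_ _ lD]] := Kl; rewrite -[_ *: x]addr0 lD // l0 addr0.
Qed.

End Coordinates.

Lemma bounded_coordinates_succ_dep n K l : bounded_coordinates n K l ->
  finspan n (e n) -> bounded_coordinates n.+1 K (fun i x => if i == n then 0 else l i x).
Proof.
move=> [K0 Kl] Sen; split => // x.
have down y : finspan n.+1 y -> finspan n y.
  by move=> /finspanS [s [t [Ss ->]]]; rewrite addrC; apply: finspanZD.
move=> /down Sx; have [xl lb lD] := Kl x Sx; split.
- rewrite big_ord_recr /= eqxx scale0r addr0 {1}xl.
  by apply: eq_bigr => i _; rewrite (ltn_eqF (ltn_ord i)).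
- by move=> i; case: eqP => _; [rewrite normr0 mulr_ge0|].
- by move=> a y i /down Sy; case: eqP => _; [rewrite mulr0 addr0|exact: lD].
Qed.

(* Determined by [x] only when [e n] is not in [finspan n]; it is [0] when [x]
   is not in [finspan n.+1]. *)
Definition lastcoef n (x : E) : R :=
  xget 0 [set t : R | exists s, finspan n s /\ x = s + t *: e n].

Lemma lastcoefP n x : finspan n.+1 x -> finspan n (x - lastcoef n x *: e n).
Proof.
move=> /finspanS [s [t Hst]].
have [s' [Ss' xE]] := xgetPex 0
  (P := [set t : R | exists s, finspan n s /\ x = s + t *: e n])
  (ex_intro _ t (ex_intro _ s Hst)).
by rewrite {1}xE addrK.
Qed.

Lemma lastcoefE n s t : ~ finspan n (e n) -> finspan n s -> lastcoef n (s + t *: e n) = t.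
Proof.
move=> Sen Ss; have := lastcoefP (n := n) (x := s + t *: e n).
set u := lastcoef n _ => Su; apply: contrapT => /eqP tu; apply: Sen.
have eE : (t - u) *: e n = s + t *: e n - u *: e n - s.
  by rewrite addrAC [s + _]addrC addrK scalerBl.
have -> : e n = (t - u)^-1 *: (s + t *: e n - u *: e n - s).
  by rewrite -eE scalerA mulVf ?scale1r // subr_eq0 eq_sym.
apply: finspanZ; apply: finspanB => //; apply: Su.
by apply/finspanS; exists s, t.
Qed.

Lemma lastcoefZD n (a : R) x y : ~ finspan n (e n) -> finspan n.+1 x -> finspan n.+1 y ->
  lastcoef n (a *: x + y) = a * lastcoef n x + lastcoef n y.
Proof.
move=> Sen Sx Sy; set tx := lastcoef n x; set ty := lastcoef n y.
have -> : a *: x + y = (a *: (x - tx *: e n) + (y - ty *: e n)) + (a * tx + ty) *: e n.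
  by rewrite scalerDl -scalerA scalerBr addrACA !subrK.
by apply: lastcoefE => //; apply: finspanZD; exact: lastcoefP.
Qed.

Lemma lastcoef_bound n (r : R) x : 0 < r -> (forall s, finspan n s -> r <= `|e n - s|) ->
  finspan n.+1 x -> r * `|lastcoef n x| <= `|x|.
Proof.
move=> r0 Hr Sx; set t := lastcoef n x.
have [->|t0] := eqVneq t 0; first by rewrite normr0 mulr0.
have := Hr _ (finspanZ (- t^-1) (lastcoefP Sx)).
have -> : e n - (- t^-1) *: (x - t *: e n) = t^-1 *: x.
  by rewrite scaleNr opprK scalerBr scalerA mulVf // scale1r addrC subrK.
by rewrite normrZ normfV mulrC ler_pdivlMr ?normr_gt0.
Qed.

(* [e n] is at distance [r > 0] from the closed [finspan n], which bounds the
   new coordinate by [|x| / r]. *)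
Lemma bounded_coordinates_succ_free n K l : bounded_coordinates n K l ->
  ~ finspan n (e n) -> exists K' l', bounded_coordinates n.+1 K' l'.
Proof.
move=> [K0 Kl] Sen.
have [r r0 Hr] : exists2 r : R, 0 < r & forall s, finspan n s -> r <= `|e n - s|.
  have [|r r0 Hr] := compact_closed_dist_gt0 (@compact_set1 _ (e n))
    (finspan_closed (conj K0 Kl)); first by move=> k ->.
  by exists r => // s; apply: Hr.
pose t x := lastcoef n x.
exists (r^-1 + K * (1 + `|e n| / r)),
  (fun i x => if i == n then t x else l i (x - t x *: e n)).
have r0' := ltW r0; have en0 := normr_ge0 (e n).
have K'0 : 0 <= K * (1 + `|e n| / r) by rewrite mulr_ge0 // addr_ge0 // divr_ge0.
split => [|x Sx]; first by rewrite addr_ge0 // invr_ge0.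
have [xl lb lD] := Kl _ (lastcoefP Sx).
have tx : `|t x| <= r^-1 * `|x|.
  by rewrite mulrC ler_pdivlMr // mulrC; exact: lastcoef_bound.
split.
- rewrite big_ord_recr /= eqxx (eq_bigr (fun i : 'I_n => l i (x - t x *: e n) *: e i)).
    by rewrite -xl subrK.
  by move=> i _; rewrite (ltn_eqF (ltn_ord i)).
- move=> i; rewrite mulrDl; case: eqP => _.
    by rewrite ler_wpDr // mulr_ge0.
  apply: ler_wpDl; first by rewrite mulr_ge0 // invr_ge0.
  apply: (le_trans (lb i)); rewrite -mulrA ler_wpM2l //.
  apply: (le_trans (ler_normB _ _)); rewrite normrZ mulrDl mul1r lerD2l.
  by rewrite mulrC -mulrA ler_wpM2l.
- move=> a y i Sy; rewrite /t lastcoefZD //; case: eqP => // _.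
  have -> : a *: x + y - (a * t x + t y) *: e n = a *: (x - t x *: e n) + (y - t y *: e n).
    by rewrite scalerDl -scalerA scalerBr addrACA opprD.
  exact/lD/lastcoefP.
Qed.

Lemma bounded_coordinates_exist n : exists K l, bounded_coordinates n K l.
Proof.
elim: n => [|n [K [l Kl]]].
  exists 0, (fun _ _ => 0); split => // x [c ->]; rewrite !big_ord0.
  by split => [|i|a y i _]; rewrite ?normr0 ?mul0r ?mulr0 ?addr0.
have [Sen|Sen] := pselect (finspan n (e n)).
  exists K, (fun i x => if i == n then 0 else l i x).
  exact: bounded_coordinates_succ_dep.
exact: bounded_coordinates_succ_free Kl Sen.
Qed.

End FiniteSpan.

Section FiniteDimensional.
Context {R : realType} {E : normedModType R}.

Lemma finite_dim_finspan (A : set E) :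
  finite_dim A -> exists n (e : nat -> E), A `<=` finspan e n.
Proof.
move=> [n [e Ae]]; exists n, (fun k => if insub k is Some i then e i else 0).
move=> x /Ae [c ->]; exists (fun k => if insub k is Some i then c i else 0).
by apply: eq_bigr => i _; rewrite valK.
Qed.

Lemma finite_dim_bounded_closed_compact (A B : set E) (M : R) : finite_dim A ->
  B `<=` A -> (forall x, B x -> `|x| <= M) -> closed B -> compact B.
Proof.
move=> /finite_dim_finspan [n [e Ae]] BA BM cB.
have [K [l Kl]] := bounded_coordinates_exist e n.
exact: (finspan_bounded_closed_compact Kl (fun x Bx => Ae x (BA x Bx)) BM cB).
Qed.

End FiniteDimensional.

(** * Weak limits in reflexive spaces *)

Section WeakLimits.
Context {R : realType} {E : normedModType R}.

Definition weak_limit (G : set_system E) (x : E) := forall f, dual_elt f -> f @ G --> f x.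

Definition dual_kernel (A : set E) := exists phi : nat -> E -> R,
  [/\ forall i, dual_elt (phi i), forall i a, A a -> phi i a = 0 &
      forall x, (forall i, phi i x = 0) -> A x].

Lemma reflexive_ultra_weak_limit (G : set_system E) (r : R) : @reflexive_space R E ->
  UltraFilter G -> G [set x | `|x| <= r] -> exists x0, weak_limit G x0.
Proof.
move=> Refl GU Gr; have GP : ProperFilter G by exact: ultra_proper.
have fcvg f : dual_elt f -> cvg (f @ G).
  move=> /dual_elt_bounded [C [C0 HC]]; apply: (ultra_bounded_cvg (M := C * r) GU).
  apply: (filterS _ Gr) => x /= xr; apply: (le_trans (HC x)).
  by rewrite ler_wpM2l // ltW.
have [x0 Hx0] : exists x0, forall f, dual_elt f -> lim (f @ G) = f x0.
  apply: Refl => [f g df dg|a f df|].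
  - exact: (cvg_lim _ (cvgD (fcvg f df) (fcvg g dg))).
  - exact: (cvg_lim _ (cvgMl_tmp (a := a) (fcvg f df))).
  exists r => f df M M0 HM.
  apply: (closed_cvg _ (@closed_norm_le R R^o (r * M)) _ _ (fcvg f df)).
  by apply: (filterS _ Gr) => x /= xr; apply: (le_trans (HM x)); rewrite mulrC ler_wpM2r.
by exists x0 => f df; rewrite -Hx0 //; exact: fcvg.
Qed.

Lemma weak_limit_near (G : set_system E) (A : set E) x0 n (fs : 'I_n -> E -> R) (eps : R) :
  ProperFilter G -> weak_limit G x0 -> G A -> (forall i, dual_elt (fs i)) -> 0 < eps ->
  exists w, A w /\ forall i, `|fs i (w - x0)| < eps.
Proof.
move=> GP Gx0 GA dfs eps0.
have Gi i : \forall w \near G, `|fs i x0 - fs i w| < eps.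
  by apply: cvgr_dist_lt => //; exact: Gx0.
have Gall : \forall w \near G, forall i, `|fs i x0 - fs i w| < eps.
  exact: filter_forall.
have [w [Aw Hw]] := filter_ex (filterI GA Gall).
by exists w; split => // i; rewrite dual_eltB // distrC.
Qed.

Lemma weak_limit_dual_kernel (G : set_system E) (A : set E) x0 :
  ProperFilter G -> dual_kernel A -> G A -> weak_limit G x0 -> A x0.
Proof.
move=> GP [phi [dphi phiA phiK]] GA Gx0; apply: phiK => i.
apply: (closed_cvg _ (@closed_eq _ 0) _ _ (Gx0 _ (dphi i))).
by apply: (filterS _ GA) => a /phiA ->.
Qed.

Lemma weakly_lsc_weak_limit (W : set E) (g : E -> R) (G : set_system E) x0 (c : R) :
  ProperFilter G -> weakly_lsc_on W g -> W x0 -> weak_limit G x0 ->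
  G [set w | W w /\ g w <= c] -> g x0 <= c.
Proof.
move=> GP glsc Wx0 Gx0 Gc; rewrite leNgt; apply/negP => cx0.
have [n [fs [eps [dfs [eps0 Hg]]]]] := glsc x0 Wx0 c cx0.
have [w [[Ww gw] Hw]] := weak_limit_near GP Gx0 Gc dfs eps0.
by have := Hg w Ww Hw; rewrite ltNge gw.
Qed.

Lemma reflexive_weakly_lsc_min (W : set E) (g : E -> R) (w1 : E) :
  @reflexive_space R E -> dual_kernel W -> weakly_lsc_on W g ->
  (forall c, exists r, forall w, W w -> g w <= c -> `|w| <= r) -> W w1 ->
  exists2 x0, W x0 & forall w, W w -> g x0 <= g w.
Proof.
move=> Refl Wker glsc gcoer Ww1.
pose lev c := [set w | W w /\ g w <= c].
have lev_g w : W w -> lev (g w) !=set0 by exists w.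
have Flev : ProperFilter (filter_from [set c | lev c !=set0] lev).
  apply: filter_from_proper => //; apply: filter_from_filter.
    by exists (g w1); exact: lev_g.
  move=> c1 c2 [w1' lev1] [w2' lev2]; exists (Num.min c1 c2).
    by case: (leP c1 c2) => c12; [exists w1'|exists w2'].
  by move=> w [Ww]; rewrite le_min => /andP[h1 h2].
have [G [GU levG]] := ultraFilterLemma Flev.
have GP : ProperFilter G by exact: ultra_proper.
have Glev w : W w -> G (lev (g w)) by move=> Ww; apply: levG; exists (g w); [exact: lev_g|].
have [r Hr] := gcoer (g w1).
have [x0 Hx0] : exists x0, weak_limit G x0.
  apply: (reflexive_ultra_weak_limit Refl GU (r := r)).
  by apply: (filterS _ (Glev _ Ww1)) => w [Ww gw]; exact: Hr.
have Wx0 : W x0.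
  by apply: (weak_limit_dual_kernel _ Wker _ Hx0); apply: (filterS _ (Glev _ Ww1)) => w [].
by exists x0 => // w Ww; exact: weakly_lsc_weak_limit glsc Wx0 Hx0 (Glev _ Ww).
Qed.

End WeakLimits.

(** * Subspaces and direct sums *)

Section Subspace.
Context {R : realType} {E : normedModType R} (A : set E).
Hypothesis HA : lin_subspace A.

Lemma subspace0 : A 0.
Proof. by case: HA. Qed.

Lemma subspaceD x y : A x -> A y -> A (x + y).
Proof. by case: HA => _ [+ _]; apply. Qed.

Lemma subspaceZ (a : R) x : A x -> A (a *: x).
Proof. by case: HA => _ [_]; apply. Qed.

Lemma subspaceB x y : A x -> A y -> A (x - y).
Proof. by move=> Ax Ay; rewrite -scaleN1r; apply/subspaceD/subspaceZ. Qed.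

Lemma closure_subspaceZ (a : R) x : closure A x -> closure A (a *: x).
Proof.
move=> /closure_normP clx; apply/closure_normP => e e0.
have a1 : 0 < `|a| + 1 by rewrite ltr_wpDl.
have [y [Ay xy]] := clx (e / (`|a| + 1)) (divr_gt0 e0 a1).
exists (a *: y); split; first exact: subspaceZ.
rewrite -scalerBr normrZ; move: xy; rewrite ltr_pdivlMr // => xy.
by apply: le_lt_trans xy; rewrite mulrC ler_wpM2l // lerDl.
Qed.

Lemma closure_subspaceB x a : closure A x -> A a -> closure A (x - a).
Proof.
move=> /closure_normP clx Aa; apply/closure_normP => e e0.
have [b [Ab xb]] := clx e e0; exists (b - a); split; first exact: subspaceB.
by rewrite opprB addrA subrK.
Qed.

End Subspace.

(* Rescaled to a large norm, a nonzero [x] lies in [B], where [f < 0]; points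
   of [A] close to it are large too, so [f > 0] there, contradicting
   continuity. *)
Lemma closure_subspace_meet_eq0 {R : realType} {E : normedModType R} (A B : set E)
    (f : E -> R) : continuous f -> lin_subspace A -> lin_subspace B ->
  (forall M, exists r, forall a, A a -> r < `|a| -> M < f a) ->
  (forall M, exists r, forall b, B b -> r < `|b| -> f b < M) ->
  forall x, closure A x -> B x -> x = 0.
Proof.
move=> fC HA HB fA fB x clx Bx; apply: contrapT => /eqP x0.
have [r1 H1] := fA 0; have [r2 H2] := fB 0.
pose y := ((`|r1| + `|r2| + 1) / `|x|) *: x.
have ny : `|y| = `|r1| + `|r2| + 1.
  by rewrite normrZ ger0_norm ?divfK ?normr_eq0 // divr_ge0 // ltW // ltr_wpDl.
have r1y : r1 < `|y| by rewrite ny; have := ler_norm r1; have := normr_ge0 r2; lra.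
have r2y : r2 < `|y| by rewrite ny; have := ler_norm r2; have := normr_ge0 r1; lra.
pose U := (@Num.norm _ E) @^-1` [set t | r1 < t] `&` f @^-1` [set t | t < 0].
have oU : open U.
  by apply: openI; apply: open_comp => [z _|];
    [exact: norm_continuous|exact: open_gt|exact: fC|exact: open_lt].
have cly : closure A y by exact: closure_subspaceZ.
have [a [Aa [r1a fa]]] :=
  cly U (open_nbhs_nbhs (conj oU (conj r1y (H2 _ (subspaceZ HB _ Bx) r2y)))).
by have := H1 a Aa r1a; move: fa => /=; lra.
Qed.

Lemma direct_sumC {R : realType} {E : normedModType R} (V W : set E) :
  direct_sum V W -> direct_sum W V.
Proof.
move=> DS x; have [[v w] [[/= Vv [Ww xE]] uniq]] := DS x.
exists (w, v); split; first by split => //; split => //; rewrite addrC.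
move=> [w' v'] [/= Ww' [Vv' xE']].
by have [-> ->] := uniq (v', w') (conj Vv' (conj Ww' (etrans xE' (addrC _ _)))).
Qed.

Section DirectSum.
Context {R : realType} {E : normedModType R} (V W : set E).
Hypotheses (HV : lin_subspace V) (HW : lin_subspace W) (DS : direct_sum V W).

Definition decomp (x : E) : E * E :=
  xget (0, 0) [set p : E * E | V p.1 /\ W p.2 /\ x = p.1 + p.2].

Lemma decompP x : V (decomp x).1 /\ W (decomp x).2 /\ x = (decomp x).1 + (decomp x).2.
Proof.
have [p [Pp _]] := DS x.
exact: (xgetPex (0, 0) (P := [set p : E * E | V p.1 /\ W p.2 /\ x = p.1 + p.2])
  (ex_intro _ p Pp)).
Qed.

Lemma decompE x v w : V v -> W w -> x = v + w -> decomp x = (v, w).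
Proof.
move=> Vv Ww xE; have [p [_ Hp]] := DS x.
by rewrite -(Hp (v, w) (conj Vv (conj Ww xE))) -(Hp _ (decompP x)).
Qed.

Lemma direct_sum_meet0 x : V x -> W x -> x = 0.
Proof.
move=> Vx Wx; have := decompE (subspace0 HV) Wx (esym (add0r x)).
by rewrite (decompE Vx (subspace0 HW) (esym (addr0 x))) => -[].
Qed.

Lemma closed_direct_summand : (forall x, closure W x -> V x -> x = 0) -> closed W.
Proof.
move=> VW x clx; have [Vv [Ww xE]] := decompP x.
set v := (decomp x).1 in Vv xE *; set w := (decomp x).2 in Ww xE *.
have := closure_subspaceB HW clx Ww; rewrite {1}xE addrK => clv.
by rewrite xE (VW v clv Vv) add0r.
Qed.

Lemma decomp1D x y : (decomp (x + y)).1 = (decomp x).1 + (decomp y).1.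
Proof.
have [Vx [Wx xE]] := decompP x; have [Vy [Wy yE]] := decompP y.
rewrite (decompE (subspaceD HV Vx Vy) (subspaceD HW Wx Wy)) //.
by rewrite {1}xE {1}yE addrACA.
Qed.

Lemma decomp1Z (a : R) x : (decomp (a *: x)).1 = a *: (decomp x).1.
Proof.
have [Vx [Wx xE]] := decompP x.
rewrite (decompE (subspaceZ HV a Vx) (subspaceZ HW a Wx)) //.
by rewrite {1}xE scalerDr.
Qed.

Lemma decomp1_W w : W w -> (decomp w).1 = 0.
Proof. by move=> Ww; rewrite (@decompE w 0 w (subspace0 HV)) // add0r. Qed.

Hypotheses (FD : finite_dim V) (Vcl : closed V) (Wcl : closed W).

(* The unit sphere of [V] is compact, hence at positive distance from [W]. *)
Lemma decomp1_bounded : exists C : R, forall x, `|(decomp x).1| <= C * `|x|.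
Proof.
pose S := [set v | V v /\ `|v| = 1].
have Sc : compact S.
  apply: (finite_dim_bounded_closed_compact (M := 1) FD) => [v []|v [_ ->]|] //.
  apply: closedI => //; change (closed ((@Num.norm R E) @^-1` [set t : R | t = 1])).
  by apply: preimage_closed; [move=> v _; exact: norm_continuous|exact: closed_eq].
have [|d d0 Hd] := compact_closed_dist_gt0 Sc Wcl.
  move=> v [Vv nv1] Wv; move: nv1; rewrite (direct_sum_meet0 Vv Wv) normr0.
  by move/eqP; rewrite eq_sym oner_eq0.
exists d^-1 => x; have [Vv [Ww xE]] := decompP x; set v := (decomp x).1 in Vv xE *.
have [->|v0] := eqVneq v 0; first by rewrite normr0 mulr_ge0 // invr_ge0 ltW.
have nv0 : 0 < `|v| by rewrite normr_gt0.
have Su : S (`|v|^-1 *: v).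
  by split; [exact: subspaceZ|rewrite normrZ normfV normr_id mulVf ?gt_eqF].
have := Hd _ _ Su (subspaceZ HW (- `|v|^-1) Ww).
rewrite scaleNr opprK -scalerDr -xE normrZ normfV normr_id => dx.
by rewrite mulrC ler_pdivlMr // mulrC -ler_pdivlMr // mulrC.
Qed.

Lemma direct_sum_dual_kernel : dual_kernel W.
Proof.
have [n [e Ve]] := finite_dim_finspan FD; have [K [l Kl]] := bounded_coordinates_exist e n.
have [C HC] := decomp1_bounded.
have Sx x : finspan e n (decomp x).1 by apply: Ve; case: (decompP x).
exists (fun i x => l i (decomp x).1); split.
- move=> i; apply: bounded_dual_elt => [x y|a x|].
  + by rewrite decomp1D (coordD Kl).
  + by rewrite decomp1Z (coordZ Kl).
  exists (K * C) => x; have [K0 /(_ _ (Sx x)) [_ lb _]] := Kl.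
  by apply: (le_trans (lb i)); rewrite -mulrA ler_wpM2l.
- move=> i w Ww; rewrite decomp1_W // -(scale0r 0) (coordZ Kl) ?mul0r //.
  exact: finspan0.
move=> x H; have [_ [Ww xE]] := decompP x; have [_ /(_ _ (Sx x)) [xl _ _]] := Kl.
by rewrite xE xl big1 ?add0r // => i _; rewrite H scale0r.
Qed.

End DirectSum.

(** * Maximizers and Clarke critical points *)

Section Maximizers.
Context {R : realType} {E : normedModType R}.

Lemma finite_dim_argmax (A : set E) (g : E -> R) (a0 : E) :
  finite_dim A -> closed A -> A a0 -> continuous g ->
  (forall M, exists r, forall v, A v -> r < `|v| -> g v < M) ->
  exists2 s, A s & forall v, A v -> g v <= g s.
Proof.
move=> FD cA Aa0 gC gneg; have [r Hr] := gneg (g a0).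
pose B := [set v | A v /\ `|v| <= Num.max r `|a0|].
have Ba0 : B a0 by split; rewrite ?le_max ?lexx ?orbT.
have cB : compact B.
  apply: (finite_dim_bounded_closed_compact (M := Num.max r `|a0|) FD) => [v []|v []|] //.
  change (closed (A `&` [set x : E | `|x| <= Num.max r `|a0|])).
  by apply: closedI => //; exact: closed_norm_le.
have [s /set_mem [As _] smax] := compact_EVT_max (ex_intro _ a0 Ba0) cB
  (continuous_subspaceT gC).
exists s => // v Av; have [vr|vr] := leP `|v| (Num.max r `|a0|).
  exact/smax/mem_set.
apply/ltW/(lt_le_trans (Hr v Av _)); first by apply: le_lt_trans vr; rewrite le_max lexx.
exact/smax/mem_set.
Qed.

Lemma strictly_quasi_concave_argmax_uniq (A : set E) (g : E -> R) s1 s2 :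
  lin_subspace A -> strictly_quasi_concave_on A g -> A s1 -> A s2 ->
  (forall v, A v -> g v <= g s1) -> (forall v, A v -> g v <= g s2) -> s1 = s2.
Proof.
move=> HA gqc As1 As2 max1 max2; apply: contrapT => s12.
have h0 : 0 < 2^-1 :> R by rewrite invr_gt0.
have h1 : 2^-1 < 1 :> R by rewrite invf_lt1 ?ltr1n.
have := gqc _ _ As1 As2 s12 _ h0 h1.
have -> : g s2 = g s1 by apply/le_anti; rewrite max1 // max2.
rewrite minxx ltNge max1 //.
by apply: (subspaceD HA); apply: (subspaceZ HA).
Qed.

End Maximizers.

Lemma ascent_critical_point {R : realType} {E : normedModType R} (Phi : E -> R) x :
  (forall v (del : R), 0 < del -> exists y (t : R),
     [/\ `|y - x| < del, 0 < t, t < del & Phi y <= Phi (y + t *: v)]) ->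
  critical_point Phi x.
Proof.
move=> asc; split.
  split; first by move=> y z; rewrite addr0.
  by split; [move=> a y; rewrite mulr0|move=> y; exact: cvg_cst].
move=> v; apply: le_ereal_inf_tmp => _ [del del0 <-].
have [y [t [yx t0 tdel Phit]]] := asc v del del0.
apply: (@le_trans _ _ (((Phi (y + t *: v) - Phi y) / t)%:E)).
  by rewrite lee_fin divr_ge0 ?subr_ge0 // ltW.
by apply: ereal_sup_ubound; exists y, t.
Qed.

Section Minimax.
Context {R : realType} {E : normedModType R} (V W : set E) (Phi : E -> R).
Hypotheses (HV : lin_subspace V) (HW : lin_subspace W) (DS : direct_sum V W).
Hypotheses (FD : finite_dim V) (PhiC : continuous Phi).
Hypothesis PhiW_coercive :
  forall M : R, exists r : R, forall w, W w -> r < `|w| -> M < Phi w.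
Hypothesis PhiV_anticoercive : forall rho M : R, exists r : R, forall v w, V v -> W w ->
  `|w| <= rho -> r < `|v| -> Phi (v + w) < M.

Lemma PhiV_anticoercive0 (M : R) : exists r : R, forall v, V v -> r < `|v| -> Phi v < M.
Proof.
have [r Hr] := PhiV_anticoercive 0 M; exists r => v Vv rv; rewrite -[v]addr0.
by apply: Hr => //; [exact: subspace0|rewrite normr0].
Qed.

Lemma W_closed : closed W.
Proof.
apply: (closed_direct_summand HW DS) => x clx Vx.
exact: closure_subspace_meet_eq0 PhiC HW HV PhiW_coercive PhiV_anticoercive0 x clx Vx.
Qed.

Lemma V_closed : closed V.
Proof.
apply: (closed_direct_summand HV (direct_sumC DS)).
apply: (closure_subspace_meet_eq0 (f := fun x => - Phi x)) => //.
- by move=> x; apply: cvgN; exact: PhiC.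
- move=> M; have [r Hr] := PhiV_anticoercive0 (- M).
  by exists r => v Vv rv; rewrite ltrNr; exact: Hr.
- move=> M; have [r Hr] := PhiW_coercive (- M).
  by exists r => w Ww rw; rewrite ltrNl; exact: Hr.
Qed.

Lemma argmax_exists w : W w ->
  exists2 s, V s & forall v, V v -> Phi (v + w) <= Phi (s + w).
Proof.
move=> Ww; apply: finite_dim_argmax FD V_closed (subspace0 HV) _ _.
  move=> v; apply: (@continuous_comp _ _ _ (fun v => v + w) Phi); last exact: PhiC.
  by apply: cvgD; [exact: cvg_id|exact: cvg_cst].
by move=> M; have [r Hr] := PhiV_anticoercive `|w| M; exists r => v Vv rv; exact: Hr.
Qed.

Definition Smax w := xget 0 [set s | V s /\ forall v, V v -> Phi (v + w) <= Phi (s + w)].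

Definition maxval w := Phi (Smax w + w).

Lemma SmaxP w : W w -> V (Smax w) /\ forall v, V v -> Phi (v + w) <= maxval w.
Proof.
move=> /argmax_exists [s Vs smax].
exact: (xgetPex 0 (P := [set s | V s /\ forall v, V v -> Phi (v + w) <= Phi (s + w)])
  (ex_intro _ s (conj Vs smax))).
Qed.

Hypothesis Phi_lsc : forall v, V v -> weakly_lsc_on W (fun w => Phi (v + w)).

Lemma maxval_weakly_lsc : weakly_lsc_on W maxval.
Proof.
move=> w0 Ww0 c cw0; have [Vs0 _] := SmaxP Ww0.
have [n [fs [eps [dfs [eps0 Hc]]]]] := Phi_lsc Vs0 Ww0 cw0.
exists n, fs, eps; split => //; split => // w Ww Hw.
exact: lt_le_trans (Hc w Ww Hw) ((SmaxP Ww).2 _ Vs0).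
Qed.

Lemma maxval_min : @reflexive_space R E ->
  exists2 x0, W x0 & forall w, W w -> maxval x0 <= maxval w.
Proof.
move=> Refl; apply: (reflexive_weakly_lsc_min Refl _ maxval_weakly_lsc _ (subspace0 HW)).
  exact: direct_sum_dual_kernel HV HW DS FD V_closed W_closed.
move=> c; have [r Hr] := PhiW_coercive c; exists r => w Ww wc.
rewrite leNgt; apply/negP => /(Hr w Ww); apply/negP; rewrite -leNgt.
by apply: le_trans wc; have := (SmaxP Ww).2 0 (subspace0 HV); rewrite add0r.
Qed.

Lemma Smax_locally_bounded w : W w ->
  exists r : R, \forall w' \near w, W w' -> `|Smax w'| <= r.
Proof.
move=> Ww; have [r Hr] := PhiV_anticoercive (`|w| + 1) (Phi w - 1).
exists r; near=> w' => Ww'; rewrite leNgt; apply/negP => rs.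
have [Vs smax] := SmaxP Ww'.
have := Hr _ _ Vs Ww' _ rs; have := smax 0 (subspace0 HV); rewrite add0r /maxval.
suff [h1 h2] : Phi w - 1 < Phi w' /\ `|w'| <= `|w| + 1 by move=> h3 /(_ h2); lra.
near: w'; apply: filterI.
  apply: (filterS _ ((cvgrPdist_lt _ _).1 (@PhiC w) 1 ltr01)) => z.
  by have := ler_norm (Phi w - Phi z); lra.
apply: (filterS _ (nbhsx_ballx w 1 ltr01)) => z; rewrite -ball_normE /= => wz.
by have := ler_normB w (w - z); rewrite opprB addrC subrK; lra.
Unshelve. all: by end_near.
Qed.

Hypothesis Phi_sqc : forall w, W w -> strictly_quasi_concave_on V (fun v => Phi (v + w)).

Lemma Smax_cluster w y : W w -> cluster (Smax @ within W (nbhs w)) y -> y = Smax w.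
Proof.
move=> Ww cly; have [Vs smax] := SmaxP Ww.
have Vy : V y.
  apply: V_closed => B By; apply: cly By.
  by apply: nearW => w' /SmaxP[].
apply: strictly_quasi_concave_argmax_uniq HV (Phi_sqc Ww) Vy Vs _ smax.
move=> v Vv; rewrite leNgt; apply/negP => yv.
pose g := (Phi (v + w) - Phi (y + w)) / 2; have g0 : 0 < g by rewrite divr_gt0 ?subr_gt0.
have [d1 d10 H1] := continuous_normP (@PhiC (v + w)) g0.
have [d2 d20 H2] := continuous_normP (@PhiC (y + w)) g0.
pose d := Num.min d1 d2 / 2; have d0 : 0 < d by rewrite divr_gt0 // lt_min d10.
have [dd1 dd2] : d < d1 /\ d + d <= d2.
  have m1 : Num.min d1 d2 <= d1 by rewrite ge_min lexx.
  have m2 : Num.min d1 d2 <= d2 by rewrite ge_min lexx orbT.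
  by move: d0; rewrite /d; lra.
have FA : (Smax @ within W (nbhs w)) (Smax @` [set w' | W w' /\ `|w - w'| < d]).
  by apply/nbhs_normP; exists d => // w' wd Ww'; exists w'.
have [_ [[w' [Ww' ww'] <-] ys]] := cly _ _ FA (nbhsx_ballx y d d0).
rewrite -ball_normE /= in ys.
have h1 : `|Phi (v + w) - Phi (v + w')| < g.
  by apply: H1; rewrite /= opprD addrACA subrr add0r; lra.
have h2 : `|Phi (y + w) - Phi (Smax w' + w')| < g.
  apply: H2; rewrite /= opprD addrACA.
  by apply: (le_lt_trans (ler_normD _ _)); lra.
have := (SmaxP Ww').2 v Vv; rewrite /maxval.
have := ler_norm (Phi (v + w) - Phi (v + w')).
have := ler_norm (Phi (Smax w' + w') - Phi (y + w)); rewrite distrC.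
by move: h1 h2; rewrite /g; lra.
Qed.

Lemma Smax_continuous w : W w -> Smax @ within W (nbhs w) --> Smax w.
Proof.
move=> Ww; have WP : ProperFilter (within W (nbhs w)).
  by apply: within_nbhs_proper; exact: subset_closure.
have [r Hr] := Smax_locally_bounded Ww.
apply: (@compact_cluster_cvg _ _ [set s | V s /\ `|s| <= r]) => [||y]; last first.
- exact: Smax_cluster.
- by apply: (filterS _ Hr) => w' h Ww'; split; [exact: (SmaxP Ww').1|exact: h].
apply: (finite_dim_bounded_closed_compact (M := r) FD) => [s []|s []|] //.
by change (closed (V `&` [set x : E | `|x| <= r])); apply: closedI;
  [exact: V_closed|exact: closed_norm_le].
Qed.

(* The witness is [y := Smax (x0 + t dw) - t dv + x0], for which
   [y + t d = Smax (x0 + t dw) + (x0 + t dw)], so that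
   [Phi (y + t d) = maxval (x0 + t dw) >= maxval x0 >= Phi y]. *)
Lemma maxval_argmin_critical x0 : W x0 -> (forall w, W w -> maxval x0 <= maxval w) ->
  critical_point Phi (Smax x0 + x0).
Proof.
move=> Wx0 x0min; apply: ascent_critical_point => d del del0.
have [Vdv [Wdw dE]] := decompP DS d.
set dv := (decomp V W d).1 in Vdv dE *; set dw := (decomp V W d).2 in Wdw dE *.
have del2 : 0 < del / 2 by rewrite divr_gt0.
have /cvgrPdist_lt/(_ _ del2)/nbhs_normP [e e0 He] := Smax_continuous Wx0.
pose m := Num.min (del / 2) e; have m0 : 0 < m by rewrite lt_min del2.
pose D := `|dv| + `|dw| + 1; have D0 : 0 < D by rewrite ltr_wpDl ?addr_ge0.
pose t := m / D; have t0 : 0 < t by rewrite divr_gt0.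
have [tdv tdw tdel] : [/\ t * `|dv| < del / 2, t * `|dw| < e & t < del].
  have tD : t * `|dv| + t * `|dw| + t = m.
    by rewrite -mulrDr -[X in _ + X]mulr1 -mulrDr divfK ?gt_eqF.
  have : m <= del / 2 /\ m <= e by rewrite !ge_min !lexx orbT.
  have := mulr_ge0 (ltW t0) (normr_ge0 dv); have := mulr_ge0 (ltW t0) (normr_ge0 dw).
  by move=> ? ? [? ?]; split; lra.
have Ww : W (x0 + t *: dw) by apply: (subspaceD HW) => //; exact: subspaceZ.
have [Vs _] := SmaxP Ww; set s := Smax (x0 + t *: dw) in Vs *.
have ss : `|Smax x0 - s| < del / 2.
  by apply: He => //=; rewrite opprD addrA subrr add0r normrN normrZ gtr0_norm.
exists (s - t *: dv + x0), t; split => //.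
- rewrite opprD addrACA subrr addr0 addrAC.
  apply: (le_lt_trans (ler_normB _ _)); rewrite distrC normrZ gtr0_norm //.
  by move: ss tdv; lra.
- have -> : s - t *: dv + x0 + t *: d = s + (x0 + t *: dw).
    by rewrite dE scalerDr addrA [_ + x0 + _]addrAC subrK -addrA.
  apply: le_trans (x0min _ Ww); apply: (SmaxP Wx0).2.
  by apply: (subspaceB HV) => //; exact: subspaceZ.
Qed.

End Minimax.

Theorem corollary10 (R : realType) (E : completeNormedModType R)
  (V W : set E) (Phi : E -> R) :
  @reflexive_space R E ->
  lin_subspace V -> lin_subspace W -> direct_sum V W -> finite_dim V ->
  locally_lipschitz Phi ->
  (* (i) *)
  (forall M : R, exists r : R, forall w, W w -> r < `|w| -> M < Phi w) ->
  (* (ii'') *)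
  (forall w, W w -> strictly_quasi_concave_on V (fun v => Phi (v + w))) ->
  (* (iii) *)
  (forall rho M : R, exists r : R, forall v w, V v -> W w -> `|w| <= rho ->
       r < `|v| -> Phi (v + w) < M) ->
  (* (iv) *)
  (forall v, V v -> weakly_lsc_on W (fun w => Phi (v + w))) ->
  (* s(w): unique maximizer of v |-> Phi (v + w) on V *)
  (forall w, W w -> exists! s, V s /\ forall v, V v -> Phi (v + w) <= Phi (s + w)) /\
  exists wb sb : E, W wb /\ V sb /\
    (* sb = s(wb) *)
    (forall v, V v -> Phi (v + wb) <= Phi (sb + wb)) /\
    (* wb minimizes w |-> max_v Phi (v + w), with value Phi (sb + wb) *)
    (forall w, W w -> exists v, V v /\ Phi (sb + wb) <= Phi (v + w)) /\
    critical_point Phi (sb + wb).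
Proof.
move=> Refl HV HW DS FD /locally_lipschitz_continuous PhiC Hi Hqc Hiii Hiv.
split=> [w Ww|].
  have [s Vs smax] := argmax_exists HV HW DS FD PhiC Hi Hiii Ww.
  exists s; split => // s' [Vs' s'max].
  exact: strictly_quasi_concave_argmax_uniq HV (Hqc w Ww) Vs Vs' smax s'max.
have [x0 Wx0 x0min] := maxval_min HV HW DS FD PhiC Hi Hiii Hiv Refl.
have [Vs smax] := SmaxP HV HW DS FD PhiC Hi Hiii Wx0.
exists x0, (Smax V Phi x0); do 3!split => //; split.
  move=> w Ww; exists (Smax V Phi w); split; last exact: x0min.
  exact: (SmaxP HV HW DS FD PhiC Hi Hiii Ww).1.
exact: (maxval_argmin_critical HV HW DS FD PhiC Hi Hiii Hqc Wx0 x0min).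
Qed.
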